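(* Let $p$ be a prime and $F$ a field of characteristic $p$. Let $L\in F[x]$ be a $p$-polynomial of $p$-degree $n$ with no repeated roots, let $E$ be a splitting field of $L$ over $F$, let $V_L\subseteq E$ be the $\mathbb{F}_p$-space of roots of $L$, and let $G$ be the Galois group of $E$ over $F$ (acting $\mathbb{F}_p$-linearly on $V_L$). Let $r$ be a positive divisor of $p-1$ and suppose that the $r$-th symmetric power $\mathrm{Sym}^r(V_L)$ (over $\mathbb{F}_p$, with the induced $G$-action) is an irreducible $\mathbb{F}_pG$-module. Let $P(x)\in F[x]$ be defined by $L(x)/x=P(x^r)$ and let $L_P\in F[x]$ be a $p$-linearized polynomial of smallest degree divisible by $P$. Then $\mathrm{Sym}^r(V_L)$ is isomorphic to the space of roots of $L_P$.
   Context: A $p$-polynomial of $p$-degree $n$ is $\sum_{i=0}^n a_ix^{p^i}$ with $a_n\neq0$. *)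

From HB Require Import structures.
From mathcomp Require Import all_boot all_order all_algebra all_field.
From mathcomp Require Import mpoly.
Set Implicit Arguments. Unset Strict Implicit. Unset Printing Implicit Defensive.
Import GRing.Theory.
Local Open Scope ring_scope.

Definition is_ppoly {R : nzRingType} (p : nat) (Q : {poly R}) : Prop :=
  forall i : nat, Q`_i != 0 -> exists k : nat, i = (p ^ k)%N.

Definition is_ppoly_of_pdeg {R : nzRingType} (p n : nat) (Q : {poly R}) : Prop :=
  is_ppoly p Q /\ size Q = (p ^ n).+1.

Definition Fp_to {p : nat} {R : nzRingType} (c : 'F_p) : R := (nat_of_ord c)%:R.

Definition Fp_lincomb {p n : nat} {E : nzRingType} (b : 'I_n -> E)
  (c : {ffun 'I_n -> 'F_p}) : E := \sum_(i < n) Fp_to (c i) * b i.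

Definition is_Fp_basis {p n : nat} {E : nzRingType} (b : 'I_n -> E) (V : pred E) : Prop :=
  [/\ forall c : {ffun 'I_n -> 'F_p}, V (Fp_lincomb (p:=p) b c),
      injective (Fp_lincomb (p:=p) b) &
      forall v, V v -> exists c, Fp_lincomb (p:=p) b c = v].

(* F_p-coordinates of x in the family b (meaningful when x is in the span). *)
Definition Fp_coord {p n : nat} {E : nzRingType} (b : 'I_n -> E) (x : E) : {ffun 'I_n -> 'F_p} :=
  odflt 0 [pick c : {ffun 'I_n -> 'F_p} | Fp_lincomb (p:=p) b c == x].

(* Sym(V) = F_p[X_0,...,X_(n-1)], X_i standing for the basis vector b_i;
   an additive map g : E -> E preserving V acts by X_j |-> sum_i c_ij X_i
   where g(b_j) = sum_i c_ij b_i, extended as an algebra morphism. *)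
Definition sym_act {p n : nat} {E : nzRingType} (b : 'I_n -> E) (g : E -> E)
  (m : {mpoly 'F_p[n]}) : {mpoly 'F_p[n]} :=
  comp_mpoly [tuple \sum_(i < n) (Fp_coord (p:=p) b (g (b j)) i)%:MP_[n] * 'X_i | j < n] m.

Definition SymPow {p n : nat} (r : nat) : pred {mpoly 'F_p[n]} :=
  fun m => m \is r.-homog.

Definition sym_irreducible {p n : nat} {E : nzRingType} (b : 'I_n -> E)
  (G : (E -> E) -> Prop) (r : nat) : Prop :=
  (exists2 m, SymPow (p:=p) (n:=n) r m & m != 0) /\
  forall U : pred {mpoly 'F_p[n]},
    (forall m, U m -> SymPow r m) -> U 0 ->
    (forall m1 m2, U m1 -> U m2 -> U (m1 + m2)) ->
    (forall (c : 'F_p) m, U m -> U (c *: m)) ->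
    (forall g m, G g -> U m -> U (sym_act b g m)) ->
    (forall m, U m -> m = 0) \/ (forall m, SymPow r m -> U m).

Definition sym_iso_to {p n : nat} {E : nzRingType} (b : 'I_n -> E)
  (G : (E -> E) -> Prop) (r : nat) (W : pred E) : Prop :=
  exists f : {mpoly 'F_p[n]} -> E,
    [/\ forall m1 m2, SymPow (p:=p) r m1 -> SymPow r m2 -> f (m1 + m2) = f m1 + f m2,
        forall (c : 'F_p) m, SymPow r m -> f (c *: m) = Fp_to c * f m,
        forall m1 m2, SymPow r m1 -> SymPow r m2 -> f m1 = f m2 -> m1 = m2,
        forall x, W x <-> exists2 m, SymPow r m & f m = x &
        forall g m, G g -> SymPow r m -> f (sym_act b g m) = g (f m)].

(* Evaluating polynomials at the F_p-basis b of V_L gives an F_p-linear,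
   Galois-equivariant map from Sym^r(V_L) to E.  Its kernel is a submodule not
   containing X_i^r (whose image b_i^r is nonzero), while the preimage of the
   roots of L_P is a submodule containing X_i^r (b_i^r is a root of P, hence of
   L_P); by irreducibility the map is injective with image S inside the roots of
   L_P.  Conversely S is a Galois-stable F_p-space, so its subspace polynomial
   prod_(w in S) (X - w) is a p-polynomial with coefficients in F.  It vanishes
   at z^r for every root z of L, hence is divisible by P, and the minimality of
   L_P leaves no room for roots of L_P outside S. *)

From HB Require Import structures.
From mathcomp Require Import all_boot all_order all_algebra all_field.
From mathcomp Require Import mpoly.
Set Implicit Arguments.
Unset Strict Implicit.
Unset Printing Implicit Defensive.
Import GRing.Theory.
Local Open Scope ring_scope.

Section FpScalars.
Variables (p : nat) (R : nzRingType).
Hypothesis pcharRp : p \in [pchar R].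
Implicit Types c : 'F_p.

Let natr_mod_Fp k : ((k %% (Zp_trunc (pdiv p)).+2)%N%:R : R) = k%:R.
Proof. by rewrite Fp_cast ?(pcharf_prime pcharRp) // (GRing.natr_mod_pchar pcharRp). Qed.

Lemma Fp_to_is_nmod_morphism : nmod_morphism (@Fp_to p R).
Proof. by split=> // x y; rewrite /Fp_to /= natr_mod_Fp natrD. Qed.

Lemma Fp_to_is_monoid_morphism : monoid_morphism (@Fp_to p R).
Proof. by split=> [|x y]; rewrite /Fp_to /= natr_mod_Fp ?natrM. Qed.

(* [Fp_to] is a ring morphism only under the characteristic hypothesis, so the
   instance is declared locally, in each section that assumes it. *)
#[local] HB.instance Definition _ :=
  GRing.isNmodMorphism.Build 'F_p R (@Fp_to p R) Fp_to_is_nmod_morphism.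
#[local] HB.instance Definition _ :=
  GRing.isMonoidMorphism.Build 'F_p R (@Fp_to p R) Fp_to_is_monoid_morphism.

Lemma pnat_pchar_expn k : [pchar R].-nat (p ^ k)%N.
Proof. by rewrite pnatX pnatE ?pcharRp ?(pcharf_prime pcharRp). Qed.

Lemma Fp_to_expn c k : Fp_to c ^+ (p ^ k)%N = Fp_to c :> R.
Proof.
elim: k => [|k IHk]; first exact: expr1.
rewrite expnSr exprM IHk -rmorphXn.
by rewrite -[X in c ^+ X](card_Fp (pcharf_prime pcharRp)) expf_card.
Qed.

End FpScalars.

Section PPolynomials.
Variables (p : nat) (R : comNzRingType).
Hypothesis pcharRp : p \in [pchar R].
Implicit Types (c : 'F_p) (Q : {poly R}).

Lemma is_ppolyD Q1 Q2 : is_ppoly p Q1 -> is_ppoly p Q2 -> is_ppoly p (Q1 + Q2).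
Proof.
move=> ppQ1 ppQ2 i; rewrite coefD; have [->|/ppQ1 //] := eqVneq Q1`_i 0.
by rewrite add0r; apply: ppQ2.
Qed.

Lemma is_ppolyZ a Q : is_ppoly p Q -> is_ppoly p (a *: Q).
Proof.
by move=> ppQ i; rewrite coefZ; have [->|/ppQ //] := eqVneq Q`_i 0; rewrite mulr0 eqxx.
Qed.

Lemma is_ppolyN Q : is_ppoly p Q -> is_ppoly p (- Q).
Proof. by rewrite -scaleN1r; apply: is_ppolyZ. Qed.

Lemma is_ppolyX : is_ppoly p ('X : {poly R}).
Proof. by move=> [|[|i]]; rewrite coefX /= ?eqxx // => _; exists 0%N. Qed.

Lemma is_ppoly_coef0 Q : is_ppoly p Q -> Q`_0 = 0.
Proof.
move=> ppQ; apply/eqP/negPn/negP => /ppQ [k /esym/eqP].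
by rewrite expn_eq0 => /andP[/eqP p0 _]; move: (pcharf_prime pcharRp); rewrite p0.
Qed.

Lemma horner_ppoly0 Q : is_ppoly p Q -> Q.[0] = 0.
Proof. by rewrite horner_coef0; apply: is_ppoly_coef0. Qed.

Lemma horner_ppolyD Q x y : is_ppoly p Q -> Q.[x + y] = Q.[x] + Q.[y].
Proof.
move=> ppQ; rewrite !horner_coef -big_split; apply: eq_bigr => i _ /=.
have [->|/ppQ [k ->]] := eqVneq Q`_i 0; first by rewrite !mul0r addr0.
by rewrite exprDn_pchar ?mulrDr ?pnat_pchar_expn.
Qed.

Lemma horner_ppolyFp Q c x : is_ppoly p Q -> Q.[Fp_to c * x] = Fp_to c * Q.[x].
Proof.
move=> ppQ; rewrite !horner_coef mulr_sumr; apply: eq_bigr => i _ /=.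
have [->|/ppQ [k ->]] := eqVneq Q`_i 0; first by rewrite !mul0r mulr0.
by rewrite exprMn Fp_to_expn // mulrCA.
Qed.

Lemma is_ppoly_Frobenius Q : is_ppoly p Q -> is_ppoly p (Q ^+ p).
Proof.
have pchar_polyR : p \in [pchar {poly R}] by rewrite pchar_poly.
have pP := pcharf_prime pcharRp.
move=> ppQ j.
have -> : Q ^+ p = \sum_(i < size Q) (Q`_i ^+ p) *: 'X^(i * p).
  rewrite -{1}[Q]coefK poly_def -(GRing.pFrobenius_autE pchar_polyR) rmorph_sum /=.
  by apply: eq_bigr => i _; rewrite GRing.pFrobenius_autE exprZn -exprM.
rewrite coef_sum => sum_nz.
have /existsP [i] : [exists i : 'I_(size Q), (Q`_i ^+ p *: 'X^(i * p))`_j != 0].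
  by apply: contraR sum_nz => /existsPn term0; apply/eqP/big1 => i _; apply/eqP/negPn.
rewrite coefZ coefXn; have [-> | _] := eqVneq j (i * p)%N; last by rewrite mulr0 eqxx.
have [->|/ppQ [k ->] _] := eqVneq Q`_i 0.
  by rewrite expr0n gtn_eqF ?(prime_gt0 pP) ?mul0r ?eqxx.
by exists k.+1; rewrite expnSr.
Qed.

Lemma comp_ppoly_XsubC Q a : is_ppoly p Q -> Q \Po ('X - a%:P) = Q - (Q.[a])%:P.
Proof.
have pchar_polyR : p \in [pchar {poly R}] by rewrite pchar_poly.
move=> ppQ; rewrite -{2}[Q]coefK poly_def.
rewrite comp_polyE horner_coef rmorph_sum -sumrB; apply: eq_bigr => i _ /=.
have [->|/ppQ [k ->]] := eqVneq Q`_i 0; first by rewrite !scale0r mul0r subr0.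
have pk := pnat_pchar_expn pchar_polyR k.
rewrite exprDn_pchar // exprNn_pchar //.
by rewrite -polyC_exp scalerDr polyCM mul_polyC scalerN.
Qed.

End PPolynomials.

Lemma is_ppoly_map (p : nat) (K : fieldType) (S : nzRingType) (f : {rmorphism K -> S})
    (Q : {poly K}) :
  is_ppoly p (map_poly f Q) <-> is_ppoly p Q.
Proof. by split=> ppQ i; have := ppQ i; rewrite coef_map /= fmorph_eq0. Qed.

Section FpSpans.
Variables (p : nat) (R : fieldType).
Hypothesis pcharRp : p \in [pchar R].
Implicit Types (c : 'F_p) (x w : R) (xs us : seq R).

#[local] HB.instance Definition _ :=
  GRing.isNmodMorphism.Build 'F_p R (@Fp_to p R) (@Fp_to_is_nmod_morphism p R pcharRp).
#[local] HB.instance Definition _ :=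
  GRing.isMonoidMorphism.Build 'F_p R (@Fp_to p R) (@Fp_to_is_monoid_morphism p R pcharRp).

Local Notation Fp_to := (@Fp_to p R).

Lemma prod_sub_Fp_multiples (Y : {poly R}) a :
  \prod_c (Y - (Fp_to c * a)%:P) = Y ^+ p - a ^+ p.-1 *: Y.
Proof.
have pP := pcharf_prime pcharRp.
have Fp_roots : 'X^p - 'X = \prod_c ('X - (Fp_to c)%:P) :> {poly R}.
  have := congr1 (map_poly Fp_to) (finField_genPoly 'F_p).
  rewrite rmorphB /= map_polyXn map_polyX rmorph_prod /= card_Fp // => ->.
  by apply: eq_bigr => c _; rewrite map_polyXsubC.
have [-> | a_nz] := eqVneq a 0.
  under eq_bigr do rewrite mulr0 subr0.
  by rewrite prodr_const card_Fp // expr0n -subn1 subn_eq0 leqNgt prime_gt1 // scale0r subr0.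
set Z := a^-1 *: Y.
have -> : Y ^+ p - a ^+ p.-1 *: Y = a ^+ p *: (Z ^+ p - Z).
  rewrite /Z exprZn scalerBr !scalerA -exprMn mulfV // expr1n scale1r.
  congr (_ - _ *: _).
  by rewrite -[in RHS](prednK (prime_gt0 pP)) exprS mulrAC mulfV ?mul1r.
have := congr1 (comp_poly Z) Fp_roots.
rewrite comp_polyB comp_Xn_poly comp_polyX rmorph_prod /= => ->.
rewrite [a ^+ p](_ : _ = a ^+ #|'F_p|); last by rewrite card_Fp.
rewrite -scaler_prodl; apply: eq_bigr => c _.
by rewrite comp_polyB comp_polyX comp_polyC /Z scalerBr scalerA mulfV // scale1r
  -mul_polyC -polyCM mulrC.
Qed.

(* All F_p-linear combinations of xs, listed with multiplicity. *)
Definition Fp_span xs : seq R :=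
  foldr (fun x S => [seq Fp_to c * x + s | c <- enum 'F_p, s <- S]) [:: 0] xs.

Lemma Fp_span_consP x xs w :
  reflect (exists c, exists2 s, s \in Fp_span xs & w = Fp_to c * x + s)
          (w \in Fp_span (x :: xs)).
Proof.
apply: (iffP allpairsP) => [[[c s] /= [_ s_in ->]]|[c [s s_in ->]]]; first by exists c, s.
by exists (c, s); rewrite mem_enum.
Qed.

Lemma mem0_Fp_span xs : 0 \in Fp_span xs.
Proof.
elim: xs => [|x xs IHxs]; first exact: mem_head.
by apply/Fp_span_consP; exists 0, 0; rewrite // rmorph0 mul0r addr0.
Qed.

Lemma Fp_span_cons x xs w : w \in Fp_span xs -> w \in Fp_span (x :: xs).
Proof. by move=> w_in; apply/Fp_span_consP; exists 0, w; rewrite // rmorph0 mul0r add0r. Qed.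

Lemma mem_Fp_span xs x : x \in xs -> x \in Fp_span xs.
Proof.
elim: xs => [//|y xs IHxs]; rewrite inE => /predU1P [->|/IHxs]; last exact: Fp_span_cons.
by apply/Fp_span_consP; exists 1, 0; rewrite ?mem0_Fp_span // rmorph1 mul1r addr0.
Qed.

Lemma Fp_spanD xs u v : u \in Fp_span xs -> v \in Fp_span xs -> u + v \in Fp_span xs.
Proof.
elim: xs u v => [|x xs IHxs] u v; first by rewrite !inE => /eqP-> /eqP->; rewrite addr0.
move=> /Fp_span_consP [c1 [s1 s1_in ->]] /Fp_span_consP [c2 [s2 s2_in ->]].
apply/Fp_span_consP; exists (c1 + c2), (s1 + s2); first exact: IHxs.
by rewrite rmorphD mulrDl addrACA.
Qed.

Lemma Fp_spanZ xs c u : u \in Fp_span xs -> Fp_to c * u \in Fp_span xs.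
Proof.
elim: xs u => [|x xs IHxs] u; first by rewrite !inE => /eqP->; rewrite mulr0.
move=> /Fp_span_consP [c1 [s1 s1_in ->]].
apply/Fp_span_consP; exists (c * c1), (Fp_to c * s1); first exact: IHxs.
by rewrite rmorphM mulrDr mulrA.
Qed.

Lemma Fp_span_ind (U : R -> Prop) xs :
    U 0 -> (forall u v, U u -> U v -> U (u + v)) -> (forall c u, U u -> U (Fp_to c * u)) ->
    (forall x, x \in xs -> U x) -> forall w, w \in Fp_span xs -> U w.
Proof.
move=> U0 UD UZ; elim: xs => [|x xs IHxs] xsU w; first by rewrite inE => /eqP->.
move=> /Fp_span_consP [c [s s_in ->]]; apply: UD; first by apply/UZ/xsU/mem_head.
by apply: IHxs s_in => y y_in; apply/xsU; rewrite inE y_in orbT.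
Qed.

Lemma uniq_Fp_span_cons x xs :
  uniq (Fp_span xs) -> x \notin Fp_span xs -> uniq (Fp_span (x :: xs)).
Proof.
move=> uniq_span x_notin; rewrite /= allpairs_uniq ?enum_uniq //.
move=> [c1 s1] [c2 s2] /allpairsP [[d1 t1] /= [_ t1_in [-> ->]]].
move=> /allpairsP [[d2 t2] /= [_ t2_in [-> ->]]] /= eq12.
suff d12 : d1 = d2 by move: eq12; rewrite d12 => /addrI->.
apply/eqP; apply: contraNT x_notin => d12_neq.
have diff_x : Fp_to (d1 - d2) * x = t2 - t1.
  rewrite rmorphB mulrBl -[LHS](addrKA t1) [t1 + _]addrC eq12.
  by rewrite opprD addrACA subrr add0r.
have -> : x = Fp_to (d1 - d2)^-1 * (t2 - t1).
  by rewrite -diff_x mulrA -rmorphM mulVf ?subr_eq0 // rmorph1 mul1r.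
apply/Fp_spanZ/Fp_spanD => //.
by rewrite -mulN1r -(rmorph1 Fp_to) -rmorphN; apply: Fp_spanZ.
Qed.

Definition subspace_poly xs : {poly R} := \prod_(w <- Fp_span xs) ('X - w%:P).

Lemma subspace_poly_cons x xs : is_ppoly p (subspace_poly xs) ->
  subspace_poly (x :: xs) =
    subspace_poly xs ^+ p - (subspace_poly xs).[x] ^+ p.-1 *: subspace_poly xs.
Proof.
set Q := subspace_poly xs => ppQ.
rewrite -prod_sub_Fp_multiples /subspace_poly /= big_allpairs_dep /= big_enum /=.
under [in RHS]eq_bigr do rewrite -(horner_ppolyFp pcharRp) // -(comp_ppoly_XsubC pcharRp) //.
apply: eq_big => [c | c _]; first by rewrite inE.
rewrite /Q /subspace_poly rmorph_prod; apply: eq_bigr => s _ /=.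
by rewrite comp_polyB comp_polyX comp_polyC polyCD opprD addrA.
Qed.

Lemma is_ppoly_subspace_poly xs : is_ppoly p (subspace_poly xs).
Proof.
elim: xs => [|x xs IHxs]; first by rewrite /subspace_poly big_seq1 subr0; apply: is_ppolyX.
rewrite subspace_poly_cons //; apply: is_ppolyD; first exact: is_ppoly_Frobenius.
by apply/is_ppolyN/is_ppolyZ.
Qed.

Fixpoint Fp_basis us : seq R :=
  if us is u :: us' then
    let xs := Fp_basis us' in if u \in Fp_span xs then xs else u :: xs
  else [::].

Lemma uniq_Fp_span_basis us : uniq (Fp_span (Fp_basis us)).
Proof. by elim: us => [|u us IHus] //=; case: ifPn => // /(uniq_Fp_span_cons IHus). Qed.

Lemma Fp_span_basis us : {subset us <= Fp_span (Fp_basis us)}.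
Proof.
elim: us => [//|u us IHus] w /predU1P [->|/IHus] /=; case: ifPn => // _.
  by apply/mem_Fp_span/mem_head.
exact: Fp_span_cons.
Qed.

Lemma Fp_basis_sub us : {subset Fp_basis us <= us}.
Proof.
elim: us => [//|u us IHus] w /=; case: ifP => _ w_in; rewrite inE.
  by rewrite IHus ?orbT.
by move: w_in; rewrite inE => /predU1P [->|/IHus->]; rewrite ?eqxx ?orbT.
Qed.

End FpSpans.

Lemma dvdp_comp_polyXn (K : fieldType) (r : nat) (P Q : {poly K}) : (0 < r)%N ->
  (P \Po 'X^r %| Q \Po 'X^r) = (P %| Q).
Proof.
move=> r_gt0; apply/idP/idP; last exact: dvdp_comp_poly.
have sizeXr : (1 < size ('X^r : {poly K}))%N by rewrite size_polyXn ltnS.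
have [-> | P_nz] := eqVneq P 0; first by rewrite comp_poly0 !dvd0p !comp_poly_eq0.
move=> dvd_comp; set G := gcdp P Q.
have G_nz : G != 0 by rewrite gcdp_eq0 negb_and P_nz.
have : size (G \Po 'X^r) = size (P \Po 'X^r).
  by apply/eqp_size/(eqp_trans (gcdp_comp_poly _ _ _))/dvdp_gcd_idl.
move/(congr1 predn); rewrite !size_comp_poly size_polyXn /= => /eqP.
rewrite eqn_pmul2r // => /eqP /(congr1 succn).
rewrite !prednK ?lt0n ?size_poly_eq0 // => /eqP size_G.
have : G %= P by rewrite -dvdp_size_eqp ?dvdp_gcdl.
by move/eqp_dvdl <-; apply: dvdp_gcdr.
Qed.

Lemma mpolyX_homog (R : nzRingType) (n : nat) (i : 'I_n) : ('X_i : {mpoly R[n]}) \is 1.-homog.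
Proof. by rewrite dhomogX; apply/mdeg1P; exists i. Qed.

Lemma mpolyXn_homog (R : nzRingType) (n k : nat) (i : 'I_n) :
  ('X_i ^+ k : {mpoly R[n]}) \is k.-homog.
Proof. by have := dhomogMn k (mpolyX_homog R i); rewrite mul1n. Qed.

Lemma mpolyXn_neq0 (R : nzRingType) (n k : nat) (i : 'I_n) : ('X_i ^+ k : {mpoly R[n]}) != 0.
Proof.
rewrite mpolyXn; apply/eqP => /mpolyP /(_ (U_(i) *+ k)%MM).
by rewrite mcoeffX eqxx mcoeff0 => /eqP; rewrite oner_eq0.
Qed.

Lemma comp_mpoly_dhomog (R : nzRingType) (n k d : nat) (lq : n.-tuple {mpoly R[k]})
    (m : {mpoly R[n]}) :
  (forall i, tnth lq i \is 1.-homog) -> m \is d.-homog -> m \mPo lq \is d.-homog.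
Proof.
move=> lq_homog m_homog; rewrite comp_mpolyEX big_seq; apply: rpred_sum => a a_supp.
have <- : mdeg a = d := dhomog_mf m_homog a_supp.
rewrite rpredZ // comp_mpolyX mdegE.
elim/big_ind2: _ => [|q1 d1 q2 d2|i _]; [exact: dhomog1 | exact: dhomogM |].
by have := dhomogMn (a i) (lq_homog i); rewrite mul1n.
Qed.

Lemma eq_sym_act (p n : nat) (R : nzRingType) (b : 'I_n -> R) (g1 g2 : R -> R) :
  g1 =1 g2 -> sym_act (p:=p) b g1 =1 sym_act (p:=p) b g2.
Proof. by move=> eq_g m; rewrite /sym_act; under eq_mktuple do rewrite eq_g. Qed.

Section SymmetricAlgebra.
Variables (p n : nat) (R : fieldType).
Hypothesis pcharRp : p \in [pchar R].
Variable b : 'I_n -> R.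
Implicit Types (m : {mpoly 'F_p[n]}) (c : {ffun 'I_n -> 'F_p}).

#[local] HB.instance Definition _ :=
  GRing.isNmodMorphism.Build 'F_p R (@Fp_to p R) (@Fp_to_is_nmod_morphism p R pcharRp).
#[local] HB.instance Definition _ :=
  GRing.isMonoidMorphism.Build 'F_p R (@Fp_to p R) (@Fp_to_is_monoid_morphism p R pcharRp).

Definition sym_eval m : R := mmap (@Fp_to p R) b m.

Lemma sym_eval0 : sym_eval 0 = 0.
Proof. exact: mmap0. Qed.

Lemma sym_evalD m1 m2 : sym_eval (m1 + m2) = sym_eval m1 + sym_eval m2.
Proof. exact: mmapD. Qed.

Lemma sym_evalB m1 m2 : sym_eval (m1 - m2) = sym_eval m1 - sym_eval m2.
Proof. exact: mmapB. Qed.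

Lemma sym_evalZ (a : 'F_p) m : sym_eval (a *: m) = Fp_to a * sym_eval m.
Proof. exact: mmapZ. Qed.

Lemma sym_evalX i : sym_eval 'X_i = b i.
Proof. by rewrite /sym_eval mmapX mmap1U. Qed.

Lemma sym_eval_mpolyX (a : 'X_{1..n}) : sym_eval 'X_[a] = \prod_(i < n) b i ^+ a i.
Proof. exact: mmapX. Qed.

Lemma sym_evalXn m k : sym_eval (m ^+ k) = sym_eval m ^+ k.
Proof. exact: rmorphXn. Qed.

Definition lin_form c : {mpoly 'F_p[n]} := \sum_(i < n) (c i)%:MP_[n] * 'X_i.

Lemma lin_form_homog c : lin_form c \is 1.-homog.
Proof. by apply: rpred_sum => i _; rewrite mul_mpolyC rpredZ ?mpolyX_homog. Qed.

Lemma sym_eval_lin_form c : sym_eval (lin_form c) = Fp_lincomb (p:=p) b c.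
Proof.
rewrite /sym_eval rmorph_sum; apply: eq_bigr => i _.
by rewrite rmorphM /= mmapC -/(sym_eval _) sym_evalX.
Qed.

Lemma sym_act_homog (r : nat) (g : R -> R) m :
  SymPow (p:=p) r m -> SymPow (p:=p) r (sym_act (p:=p) b g m).
Proof. by apply: comp_mpoly_dhomog => i; rewrite tnth_mktuple lin_form_homog. Qed.

Section Basis.
Variable V : pred R.
Hypothesis b_basis : is_Fp_basis (p:=p) b V.

Lemma Fp_lincomb_coord v : V v -> Fp_lincomb (p:=p) b (Fp_coord (p:=p) b v) = v.
Proof.
move=> Vv; rewrite /Fp_coord; case: pickP => [c /eqP // | no_coord].
have [_ _ /(_ v Vv) [c lincomb_c]] := b_basis.
by have := no_coord c; rewrite lincomb_c eqxx.
Qed.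

Let Fp_lincomb_delta i : Fp_lincomb (p:=p) b [ffun j => (j == i)%:R] = b i.
Proof.
rewrite /Fp_lincomb (bigD1 i) //= big1 => [|j /negbTE ji]; rewrite ffunE ?eqxx ?ji.
  by rewrite rmorph1 mul1r addr0.
by rewrite rmorph0 mul0r.
Qed.

Lemma basis_mem i : V (b i).
Proof. by have [Vlincomb _ _] := b_basis; rewrite -Fp_lincomb_delta; apply: Vlincomb. Qed.

Lemma basis_neq0 i : b i != 0.
Proof.
have [_ lincomb_inj _] := b_basis; apply/eqP => bi0.
have : Fp_lincomb (p:=p) b [ffun j => (j == i)%:R] = Fp_lincomb (p:=p) b 0.
  rewrite Fp_lincomb_delta bi0 /Fp_lincomb big1 // => j _.
  by rewrite ffunE rmorph0 mul0r.
by move/lincomb_inj/ffunP/(_ i); rewrite !ffunE eqxx => /eqP; rewrite oner_eq0.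
Qed.

Lemma sym_eval_act (s : {rmorphism R -> R}) m : (forall i, V (s (b i))) ->
  sym_eval (sym_act (p:=p) b s m) = s (sym_eval m).
Proof.
move=> sV; rewrite /sym_act comp_mpolyEX /sym_eval !rmorph_sum /=.
apply: eq_bigr => a _; rewrite mmapZ comp_mpolyX rmorphM rmorph_nat /=; congr (_ * _).
rewrite rmorph_prod /mmap1 rmorph_prod; apply: eq_bigr => i _ /=.
rewrite !rmorphXn tnth_mktuple /= -/(sym_eval _) -[\sum_(_ < n) _]/(lin_form _).
by rewrite sym_eval_lin_form Fp_lincomb_coord.
Qed.

End Basis.

End SymmetricAlgebra.

Section GaloisDescent.
Variables (F : fieldType) (E : splittingFieldType F).
Local Notation liftE := (map_poly (in_alg E)).

Lemma gal_lift_poly (s : gal_of {:E}) (Q : {poly F}) : map_poly s (liftE Q) = liftE Q.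
Proof.
rewrite -map_poly_comp; apply: eq_map_poly => a /=.
by rewrite -[a%:A]/(a *: 1) linearZ /= rmorph1.
Qed.

Lemma root_lift_gal (s : gal_of {:E}) (Q : {poly F}) x :
  root (liftE Q) x -> root (liftE Q) (s x).
Proof. by move=> /eqP Qx; apply/eqP; rewrite -(gal_lift_poly s) horner_map Qx rmorph0. Qed.

Lemma galois_splitting_separable (L : {poly F}) :
  separable_poly L -> splittingFieldFor 1%VS (liftE L) fullv -> galois 1%VS {:E}.
Proof.
move=> L_sep L_split; apply/splitting_galoisField; exists (liftE L); split=> //.
  by apply/polyOverP => i; rewrite coef_map /= memvZ // mem1v.
by rewrite separable_map.
Qed.

Lemma gal_fixed_polyOver1 (Q : {poly E}) : galois 1%VS {:E} ->
    (forall s, s \in 'Gal({:E} / 1%VS)%g -> map_poly s Q = Q) ->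
  Q \is a polyOver 1%VS.
Proof.
move=> /galois_fixedField fixE Qfix; apply/polyOverP => i; rewrite -fixE.
by apply/fixedFieldP; [exact: memvf | move=> s /Qfix {2}<-; rewrite coef_map].
Qed.

End GaloisDescent.

Section SymPowerRoots.
Variables (p : nat) (F : fieldType) (E : splittingFieldType F).
Hypothesis pcharFp : p \in [pchar F].
Variables (n r : nat) (L P LP : {poly F}) (b : 'I_n -> E).

Local Notation liftE := (map_poly (in_alg E)).
Local Notation Gal := (fun g : E -> E =>
  exists2 s : gal_of {:E}, s \in ('Gal({:E} / 1%VS))%g & g =1 s).
Local Notation sym_eval := (sym_eval (p:=p) b).
Local Notation SymPow := (SymPow (p:=p) (n:=n) r).

Hypotheses (L_sep : separable_poly L) (L_split : splittingFieldFor 1%VS (liftE L) fullv).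
Hypothesis b_basis : is_Fp_basis (p:=p) b (fun x => root (liftE L) x).
Hypothesis Sym_irr : sym_irreducible (p:=p) b Gal r.
Hypotheses (r_gt0 : (0 < r)%N) (L_eq : L = 'X * (P \Po 'X^r)).
Hypotheses (LP_ppoly : is_ppoly p LP) (LP_neq0 : LP != 0) (P_dvd_LP : P %| LP).
Hypothesis LP_min :
  forall Q : {poly F}, is_ppoly p Q -> Q != 0 -> P %| Q -> (size LP <= size Q)%N.

Let pcharEp : p \in [pchar E] := rmorph_pchar (in_alg E) pcharFp.

Lemma sym_eval_gal g m : Gal g -> sym_eval (sym_act (p:=p) b g m) = g (sym_eval m).
Proof.
move=> [s _ gs]; rewrite (eq_sym_act _ gs) gs (sym_eval_act pcharEp b_basis) // => i.
exact/root_lift_gal/(basis_mem pcharEp b_basis).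
Qed.

Lemma n_gt0 : (0 < n)%N.
Proof.
have [[m m_homog m_nz] _] := Sym_irr; case: posnP => // n0.
case/eqP: m_nz; apply/mpolyP => a; rewrite mcoeff0 (dhomog_nemf_coeff m_homog) //.
have deg_a : mdeg a = 0%N.
  by rewrite mdegE big1 // => i; have := ltn_ord i; rewrite [X in (_ < X)%N -> _]n0.
by change (mdeg a != r); rewrite deg_a eq_sym -lt0n.
Qed.

Lemma sym_irreducible_preimage (W : pred E) m0 :
    W 0 -> (forall u v, W u -> W v -> W (u + v)) ->
    (forall (c : 'F_p) u, W u -> W (Fp_to c * u)) ->
    (forall s : gal_of {:E}, s \in ('Gal({:E} / 1%VS))%g -> forall u, W u -> W (s u)) ->
    SymPow m0 -> m0 != 0 -> W (sym_eval m0) ->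
  forall m, SymPow m -> W (sym_eval m).
Proof.
move=> W0 WD WZ Wgal m0_homog m0_nz Wm0.
have [_ /(_ (fun m => (m \is r.-homog) && W (sym_eval m)))] := Sym_irr.
case=> [m /andP[] // | | m1 m2 | c m | g m | U0 | Uall].
- by rewrite rpred0 (sym_eval0 pcharEp).
- move=> /andP[m1_homog Wm1] /andP[m2_homog Wm2].
  by rewrite rpredD // (sym_evalD pcharEp) /=; apply: WD.
- by move=> /andP[m_homog Wm]; rewrite rpredZ // (sym_evalZ pcharEp) /=; apply: WZ.
- move=> gGal /andP[m_homog Wm]; apply/andP; split; first exact: sym_act_homog.
  by rewrite sym_eval_gal //; have [s s_gal ->] := gGal; apply: Wgal.
- by case/eqP: m0_nz; apply: U0; apply/andP.
- by move=> m /Uall /andP[].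
Qed.

Lemma sym_eval_inj m1 m2 : SymPow m1 -> SymPow m2 -> sym_eval m1 = sym_eval m2 -> m1 = m2.
Proof.
move=> m1_homog m2_homog eq_eval; apply/eqP; rewrite -subr_eq0; apply/negPn/negP => m12_nz.
have : sym_eval ('X_(Ordinal n_gt0) ^+ r) == 0.
  apply: (@sym_irreducible_preimage (fun u => u == 0) (m1 - m2)).
  - by rewrite /=.
  - by move=> u v /eqP-> /eqP->; rewrite addr0.
  - by move=> c u /eqP->; rewrite mulr0.
  - by move=> s _ u /eqP->; rewrite rmorph0.
  - exact: rpredB.
  - exact: m12_nz.
  - by rewrite /= (sym_evalB pcharEp) eq_eval subrr.
  exact: mpolyXn_homog.
rewrite (sym_evalXn pcharEp) (sym_evalX pcharEp) expf_eq0.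
by rewrite (negbTE (basis_neq0 pcharEp b_basis _)) andbF.
Qed.

Lemma root_LP_expr x : root (liftE L) x -> root (liftE LP) (x ^+ r).
Proof.
have [-> _ | x_nz] := eqVneq x 0.
  by rewrite expr0n gtn_eqF // /root (horner_ppoly0 pcharEp) ?is_ppoly_map.
rewrite L_eq rmorphM /= map_polyX map_comp_poly map_polyXn /root hornerM hornerX.
rewrite horner_comp hornerXn mulf_eq0 (negbTE x_nz) /= => Px.
by apply: root_dvdp Px; rewrite dvdp_map.
Qed.

Lemma root_LP_sym_eval m : SymPow m -> root (liftE LP) (sym_eval m).
Proof.
have LP_lift : is_ppoly p (liftE LP) by rewrite is_ppoly_map.
apply: (sym_irreducible_preimage (m0 := 'X_(Ordinal n_gt0) ^+ r)).
- by rewrite /root (horner_ppoly0 pcharEp).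
- by move=> u v; rewrite /root (horner_ppolyD pcharEp) // => /eqP-> /eqP->; rewrite addr0.
- by move=> c u; rewrite /root (horner_ppolyFp pcharEp) // => /eqP->; rewrite mulr0.
- by move=> s _ u; apply: root_lift_gal.
- exact: mpolyXn_homog.
- exact: mpolyXn_neq0.
by rewrite (sym_evalXn pcharEp) (sym_evalX pcharEp) root_LP_expr ?(basis_mem pcharEp b_basis).
Qed.

Let sym_image : seq E :=
  Fp_span p (Fp_basis p (map (fun a : 'X_{1..n < r.+1} => sym_eval 'X_[a])
                             (enum [pred a : 'X_{1..n < r.+1} | mdeg a == r]))).

Lemma mem_sym_image w : reflect (exists2 m, SymPow m & sym_eval m = w) (w \in sym_image).
Proof.
apply: (iffP idP) => [|[m m_homog <-]].
  apply: (Fp_span_ind (U := fun w => exists2 m, SymPow m & sym_eval m = w))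
    => [|u v [m1 ? <-] [m2 ? <-]|c u [m ? <-]|x /Fp_basis_sub /mapP [a]].
  - by exists 0; [apply: rpred0 | apply: sym_eval0].
  - by exists (m1 + m2); [apply: rpredD | apply: sym_evalD].
  - by exists (c *: m); [apply: rpredZ | apply: sym_evalZ].
  by rewrite mem_enum inE => deg_a ->; exists 'X_[a]; rewrite // /SymPow dhomogX.
rewrite /sym_eval /mmap big_seq; apply: (big_ind (fun w => w \in sym_image)).
- exact: mem0_Fp_span.
- exact: Fp_spanD.
move=> a a_supp; apply/(Fp_spanZ pcharEp)/(Fp_span_basis pcharEp)/mapP.
have deg_a : mdeg a = r := dhomog_mf m_homog a_supp.
have a_bound : (mdeg a < r.+1)%N by rewrite deg_a.
by exists (BMultinom a_bound); rewrite ?mem_enum ?inE /= ?deg_a // (sym_eval_mpolyX pcharEp).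
Qed.

Lemma sym_image_gal (s : gal_of {:E}) :
  s \in ('Gal({:E} / 1%VS))%g -> {subset map s sym_image <= sym_image}.
Proof.
move=> s_gal _ /mapP [w /mem_sym_image [m m_homog <-] ->]; apply/mem_sym_image.
exists (sym_act (p:=p) b s m); first exact: sym_act_homog.
by apply: sym_eval_gal; exists s.
Qed.

Let image_poly : {poly E} := \prod_(w <- sym_image) ('X - w%:P).

Lemma image_poly_over1 : image_poly \is a polyOver 1%VS.
Proof.
apply: (gal_fixed_polyOver1 (galois_splitting_separable L_sep L_split)) => s s_gal.
rewrite rmorph_prod /=; under eq_bigr do rewrite map_polyXsubC /=.
rewrite -(big_map s predT (fun w => 'X - w%:P)); apply: perm_big.
have image_uniq : uniq sym_image := uniq_Fp_span_basis pcharEp _.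
have s_image_uniq : uniq (map s sym_image) by rewrite (map_inj_uniq (fmorph_inj s)).
have [_ eq_image] :=
  uniq_min_size s_image_uniq (sym_image_gal s_gal) (eq_leq (esym (size_map _ _))).
exact: uniq_perm.
Qed.

Lemma P_dvd_image_poly QF : liftE QF = image_poly -> P %| QF.
Proof.
move=> QF_lift; rewrite -(dvdp_comp_polyXn _ _ r_gt0).
apply: (@dvdp_trans _ L); first by rewrite L_eq dvdp_mull.
rewrite -(dvdp_map (in_alg E)) map_comp_poly map_polyXn QF_lift.
have [rs Lrs _] := L_split; rewrite (eqp_dvdl _ Lrs).
have rs_uniq : uniq rs by rewrite -separable_prod_XsubC -(eqp_separable Lrs) separable_map.
apply: uniq_roots_dvdp; last by rewrite uniq_rootsE.
apply/allP => z z_rs; have Lz : root (liftE L) z by rewrite (eqp_root Lrs) root_prod_XsubC.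
rewrite /root horner_comp hornerXn -/(root _ _) root_prod_XsubC; apply/mem_sym_image.
exists (lin_form (Fp_coord (p:=p) b z) ^+ r).
  by have := dhomogMn r (lin_form_homog (Fp_coord (p:=p) b z)); rewrite mul1n.
by rewrite (sym_evalXn pcharEp) (sym_eval_lin_form pcharEp) (Fp_lincomb_coord b_basis).
Qed.

Lemma root_LP_sym_image x : root (liftE LP) x -> x \in sym_image.
Proof.
move=> LPx; apply: contraT => x_notin.
have [QF /esym QF_lift] := polyOver1P image_poly_over1.
have QF_ppoly : is_ppoly p QF.
  by rewrite -(is_ppoly_map p (in_alg E)) QF_lift; apply: is_ppoly_subspace_poly.
have size_QF : size QF = (size sym_image).+1.
  by rewrite -(size_map_poly (in_alg E)) QF_lift size_prod_XsubC.
have QF_neq0 : QF != 0 by rewrite -size_poly_eq0 size_QF.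
have := LP_min QF_ppoly QF_neq0 (P_dvd_image_poly QF_lift); rewrite size_QF.
have LP_roots : all (root (liftE LP)) (x :: sym_image).
  apply/allP => y /predU1P [-> // | /mem_sym_image [m m_homog <-]].
  exact: root_LP_sym_eval.
have LP_lift_neq0 : liftE LP != 0 by rewrite map_poly_eq0.
have := max_poly_roots LP_lift_neq0 LP_roots.
rewrite /= x_notin uniq_Fp_span_basis // size_map_poly ltnNge => /(_ isT) LP_gt LP_le.
by rewrite LP_le in LP_gt.
Qed.

Lemma sym_iso_roots_LP : sym_iso_to (p:=p) b Gal r (fun x => root (liftE LP) x).
Proof.
exists sym_eval; split.
- by move=> m1 m2 _ _; apply: sym_evalD.
- by move=> c m _; apply: sym_evalZ.
- exact: sym_eval_inj.
- move=> x; split=> [/root_LP_sym_image/mem_sym_image // | [m m_homog <-]].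
  exact: root_LP_sym_eval.
- by move=> g m g_gal _; apply: sym_eval_gal.
Qed.

End SymPowerRoots.

Theorem corollary6p1 (p : nat) (F : fieldType) (E : splittingFieldType F)
    (n r : nat) (L P LP : {poly F}) (b : 'I_n -> E) :
  prime p -> p \in [pchar F] ->
  is_ppoly_of_pdeg p n L ->
  separable_poly L ->
  splittingFieldFor 1%VS (map_poly (in_alg E) L) fullv ->
  is_Fp_basis (p:=p) b (fun x : E => root (map_poly (in_alg E) L) x) ->
  (0 < r)%N -> (r %| p.-1)%N ->
  sym_irreducible (p:=p) b
    (fun g : E -> E => exists2 s : gal_of {:E}, s \in ('Gal({:E} / 1%VS))%g & g =1 s) r ->
  L = 'X * (P \Po 'X^r) ->
  is_ppoly p LP -> LP != 0 -> P %| LP ->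
  (forall Q : {poly F}, is_ppoly p Q -> Q != 0 -> P %| Q -> (size LP <= size Q)%N) ->
  sym_iso_to (p:=p) b
    (fun g : E -> E => exists2 s : gal_of {:E}, s \in ('Gal({:E} / 1%VS))%g & g =1 s) r
    (fun x : E => root (map_poly (in_alg E) LP) x).
Proof.
(* That L is a p-polynomial and [r %| p.-1] only serve to make P exist, which
   is assumed here; [prime p] follows from [p \in [pchar F]]. *)
move=> _ pcharFp _ L_sep L_split b_basis r_gt0 _ Sym_irr L_eq LP_ppoly LP_neq0 P_dvd_LP LP_min.
exact: (sym_iso_roots_LP pcharFp L_sep L_split b_basis Sym_irr r_gt0 L_eq
          LP_ppoly LP_neq0 P_dvd_LP LP_min).
Qed.
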